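(* Let $\mathbf{T}\in\{0,1\}^{n\times\ell}$ be a matrix consisting of $\ell\ge 14$ dirty columns with $\delta(\mathbf{T})=3$. Then there is a permutation of the rows of $\mathbf{T}$ such that the resulting matrix $\mathbf{T}'$ satisfies $|\mathcal{T}'_3|\ge 5$.
   Context: A column of a binary matrix is dirty if it contains both $0$ and $1$. For rows $u,w\in\{0,1\}^\ell$, $D(u,w)=\{j:u[j]\ne w[j]\}$ and $d(u,w)=|D(u,w)|$; $\delta(\mathbf{T})=\max_{i\ne i'}d(\mathbf{T}[i],\mathbf{T}[i'])$. For a matrix $\mathbf{T}'$ with $n$ rows $\mathbf{T}'[1],\dots,\mathbf{T}'[n]$, $\mathcal{T}'_3$ is the set system (without duplicates) $\{D(\mathbf{T}'[i],\mathbf{T}'[n]): i\in[n-1],\ d(\mathbf{T}'[i],\mathbf{T}'[n])=3\}$. *)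

From mathcomp Require Import all_boot all_order all_algebra all_fingroup.
Set Implicit Arguments. Unset Strict Implicit. Unset Printing Implicit Defensive.

Definition dirty_col (m l : nat) (T : 'M[bool]_(m, l)) (j : 'I_l) : Prop :=
  (exists i, T i j = false) /\ (exists i, T i j = true).

Definition Dset (m l : nat) (T : 'M[bool]_(m, l)) (i i' : 'I_m) : {set 'I_l} :=
  [set j | T i j != T i' j].

Definition dist (m l : nat) (T : 'M[bool]_(m, l)) (i i' : 'I_m) : nat :=
  #|Dset T i i'|.

Definition delta (m l : nat) (T : 'M[bool]_(m, l)) : nat :=
  \max_(p : 'I_m * 'I_m | p.1 != p.2) dist T p.1 p.2.

Definition permute_rows (m l : nat) (s : 'S_m) (T : 'M[bool]_(m, l)) : 'M[bool]_(m, l) :=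
  \matrix_(i, j) T (s i) j.

Definition calT3 (n l : nat) (T : 'M[bool]_(n.+1, l)) : {set {set 'I_l}} :=
  [set Dset T i ord_max | i in [pred i : 'I_n.+1 | (i != ord_max) && (dist T i ord_max == 3)]].

From mathcomp Require Import all_boot all_order all_algebra all_fingroup.
From mathcomp Require Import zify.
Set Implicit Arguments. Unset Strict Implicit. Unset Printing Implicit Defensive.

(* Take rows r, s at distance 3 and put A := D(r, s). For any row x,
   D(x, r) and D(x, s) agree outside A and are complementary inside A, so
   d(x, r) + d(x, s) = 3 + 2 |D(x, r) \ A|. As both distances are at most 3,
   a row x that differs from r in a column j outside A has D(x, r) \ A = {j}
   and d(x, r) + d(x, s) = 5, i.e. x is at distance 3 from r or from s.
   Every one of the at least 11 columns outside A is dirty, so it yields such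
   a row; for at least 6 of them the row lies at distance 3 from the same row
   b in {r, s}, and the sets D(x, b) are distinct because their parts outside
   A are distinct singletons. Moving row b last gives |T'_3| >= 6. *)

Section Rows.

Variables (m l : nat) (T : 'M[bool]_(m, l)).

Lemma Dset_id i : Dset T i i = set0.
Proof. by apply/setP => j; rewrite !inE eqxx. Qed.

Lemma dist_le_delta i i' : dist T i i' <= delta T.
Proof.
have [-> | neq_ii'] := eqVneq i i'; first by rewrite /dist Dset_id cards0.
exact: (leq_bigmax_cond (i, i') neq_ii').
Qed.

Lemma delta_attained : 0 < delta T -> exists i i', dist T i i' = delta T.
Proof.
rewrite /delta; case: (pickP [pred p : 'I_m * 'I_m | p.1 != p.2]) => [p0 p0P | noP].
  by rewrite (bigmax_eq_arg _ p0P); eexists; eexists.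
by rewrite big_pred0.
Qed.

Lemma dirty_col_neq j i : dirty_col T j -> exists i', T i' j != T i j.
Proof. by case=> [[i0 T0] [i1 T1]]; case: (T i j); [exists i0 | exists i1]; rewrite ?T0 ?T1. Qed.

Section Triangle.

Variables x r s : 'I_m.
Let A := Dset T r s.

Lemma Dset_setD_sym : Dset T x s :\: A = Dset T x r :\: A.
Proof. by apply/setP => j; rewrite !inE; case: (T x j) (T r j) (T s j) => [] [] []. Qed.

Lemma Dset_setI : Dset T x s :&: A = A :\: Dset T x r.
Proof. by apply/setP => j; rewrite !inE; case: (T x j) (T r j) (T s j) => [] [] []. Qed.

Lemma dist_add : dist T x r + dist T x s = #|A| + (#|Dset T x r :\: A|).*2.
Proof.
have := cardsID A (Dset T x r); have := cardsID A (Dset T x s).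
have := cardsID (Dset T x r) A.
by rewrite Dset_setD_sym Dset_setI setIC /dist -/A; lia.
Qed.

Hypotheses (delta3 : delta T = 3) (dist_rs : dist T r s = 3).
Variable j : 'I_l.
Hypotheses (jA : j \notin A) (Txj : T x j != T r j).

Lemma Dset_setD_eq1 : Dset T x r :\: A = [set j].
Proof.
have jD : j \in Dset T x r :\: A by rewrite in_setD jA inE.
have : #|Dset T x r :\: A| == 1.
  have := dist_add; have := dist_le_delta x r; have := dist_le_delta x s.
  have /card_gt0P : exists k, k \in Dset T x r :\: A by exists j.
  by move: dist_rs; rewrite /dist -/A delta3; lia.
by case/cards1P => k eqk; move: jD; rewrite eqk => /set1P <-.
Qed.

Lemma dist_add_eq5 : dist T x r + dist T x s = 5.
Proof. by rewrite dist_add Dset_setD_eq1 cards1 /A -/(dist T r s) dist_rs. Qed.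

End Triangle.

Definition T3_at (b : 'I_m) : {set {set 'I_l}} :=
  [set Dset T i b | i in [pred i : 'I_m | dist T i b == 3]].

Lemma card_le_T3_at b (J : {set 'I_l}) (g : 'I_l -> 'I_m) :
  {in J, forall j, dist T (g j) b = 3} ->
  {in J &, injective (fun j => Dset T (g j) b)} -> #|J| <= #|T3_at b|.
Proof.
move=> dist_g inj_g; rewrite -(card_in_imset inj_g); apply/subset_leq_card/subsetP.
by move=> _ /imsetP[j Jj ->]; apply: imset_f; rewrite inE dist_g.
Qed.

End Rows.

Lemma Dset_permute_rows m l (s : 'S_m) (T : 'M[bool]_(m, l)) i i' :
  Dset (permute_rows s T) i i' = Dset T (s i) (s i').
Proof. by apply/setP => j; rewrite !inE !mxE. Qed.

Lemma T3_at_permute_rows m l (s : 'S_m) (T : 'M[bool]_(m, l)) b :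
  T3_at (permute_rows s T) b = T3_at T (s b).
Proof.
apply/setP => D; apply/imsetP/imsetP => [[i] | [i]].
  by rewrite inE /dist !Dset_permute_rows => d3 ->; exists (s i).
by rewrite inE => d3 ->; exists (s^-1%g i); rewrite ?inE /dist !Dset_permute_rows permKV.
Qed.

Lemma calT3E n l (T : 'M[bool]_(n.+1, l)) : calT3 T = T3_at T ord_max.
Proof.
apply/setP => D; apply/imsetP/imsetP => [] [i]; rewrite !inE.
  by case/andP => _ d3 ->; exists i; rewrite ?inE.
move=> d3 ->; exists i => //; rewrite inE d3 andbT.
by apply: contraTneq d3 => ->; rewrite /dist Dset_id cards0.
Qed.

Lemma calT3_permute_rows_tperm n l (T : 'M[bool]_(n.+1, l)) b :
  calT3 (permute_rows (tperm b ord_max) T) = T3_at T b.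
Proof. by rewrite calT3E T3_at_permute_rows tpermR. Qed.

Section DistanceThree.

Variables (m l : nat) (T : 'M[bool]_(m, l)) (r s : 'I_m) (f : 'I_l -> 'I_m).
Hypotheses (delta3 : delta T = 3) (dist_rs : dist T r s = 3).
Hypothesis f_neq : forall j, T (f j) j != T r j.

Let A := Dset T r s.
Let J b := [set j in ~: A | dist T (f j) b == 3].

Lemma setC_subset_J : ~: A \subset J r :|: J s.
Proof.
apply/subsetP => j jCA; have jA : j \notin A by rewrite inE in jCA.
have := dist_add_eq5 delta3 dist_rs jA (f_neq j).
have := dist_le_delta T (f j) r; have := dist_le_delta T (f j) s.
by move: jCA; rewrite !inE delta3 => -> /=; lia.
Qed.

Lemma card_J_le b :
  (forall x, Dset T x b :\: A = Dset T x r :\: A) -> #|J b| <= #|T3_at T b|.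
Proof.
move=> DbA; apply: (card_le_T3_at (g := f)) => [j | j1 j2].
  by rewrite inE => /andP[_ /eqP].
move=> /setIdP[+ _] /setIdP[+ _]; rewrite !in_setC => j1A j2A /= eqD.
apply/set1_inj; rewrite -(Dset_setD_eq1 delta3 dist_rs j1A (f_neq j1)).
by rewrite -(Dset_setD_eq1 delta3 dist_rs j2A (f_neq j2)) -!DbA eqD.
Qed.

Lemma T3_at_card_sum : l - 3 <= #|T3_at T r| + #|T3_at T s|.
Proof.
have card_CA : #|~: A| = l - 3 by rewrite cardsCs card_ord setCK -dist_rs.
rewrite -card_CA; apply: leq_trans (subset_leq_card setC_subset_J) _.
apply: leq_trans (leq_card_setU _ _) _.
by apply: leq_add; apply: card_J_le => // x; rewrite Dset_setD_sym.
Qed.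

End DistanceThree.

Theorem lemma15 (n l : nat) (T : 'M[bool]_(n.+1, l)) :
  14 <= l ->
  (forall j : 'I_l, dirty_col T j) ->
  delta T = 3 ->
  exists s : 'S_n.+1, 5 <= #|calT3 (permute_rows s T)|.
Proof.
move=> l_ge14 dirty delta3.
have [r [s dist_rs]] : exists r s, dist T r s = 3.
  by rewrite -delta3; apply: delta_attained; rewrite delta3.
have [f f_neq] := fin_all_exists (fun j => dirty_col_neq r (dirty j)).
have T3_sum := T3_at_card_sum delta3 dist_rs f_neq.
have [b T3b] : exists b, 5 <= #|T3_at T b|.
  by case: (leqP 5 #|T3_at T r|) => ?; [exists r | exists s; lia].
by exists (tperm b ord_max); rewrite calT3_permute_rows_tperm.
Qed.
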